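(* Let $C_m=\frac{1}{m+1}\binom{2m}{m}$ denote the $m$-th Catalan number and, for $i\ge1$, let $\alpha_i=C_{i-1}+\delta_{i,1}$, where $\delta_{i,1}$ is $1$ if $i=1$ and $0$ otherwise. Then for every integer $d\ge1$, $$\binom{2d}{d}=\sum_{\mathcal P}\alpha_{a_1}\alpha_{a_2}\cdots\alpha_{a_k},$$ where the sum is over all cyclic compositions $\mathcal P$ of $d$ (into any number $k\ge1$ of parts) and $a_1,\dots,a_k$ are the sizes of the parts of $\mathcal P$.
   Context: For $d\ge1$ let $C_d$ (the cycle graph) have vertex set $\mathbb Z_d$ and the $d$ edges $\{i,i+1\}$, $i\in\mathbb Z_d$ (a loop if $d=1$, two parallel edges if $d=2$). A cyclic composition of $d$ into $k$ parts ($1\le k\le d$) is a choice of a $k$-element subset of the $d$ edges of the cycle to delete; its parts are the $k$ connected components (each a path) of the remaining graph, and the size of a part is its number of vertices. There are $\binom dk$ cyclic compositions of $d$ into $k$ parts, hence $2^d-1$ cyclic compositions of $d$ in total. *)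

From mathcomp Require Import all_boot.
Set Implicit Arguments. Unset Strict Implicit. Unset Printing Implicit Defensive.

Definition catalan (m : nat) : nat := 'C(2 * m, m) %/ m.+1.

Definition alpha (i : nat) : nat := catalan i.-1 + (i == 1).

(* The cycle graph C_d: vertices 'I_d (= Z_d), edge number i : 'I_d joins
   i and i+1 mod d (ordS i).  Given the set S of deleted edges, two vertices
   are adjacent in the remaining graph iff some non-deleted edge joins them. *)
Definition cyc_adj (d : nat) (S : {set 'I_d}) : rel 'I_d :=
  fun x y => ((x \notin S) && (y == ordS x)) || ((y \notin S) && (x == ordS y)).

Definition cyc_parts (d : nat) (S : {set 'I_d}) : {set {set 'I_d}} :=
  equivalence_partition (connect (cyc_adj S)) [set: 'I_d].

From mathcomp Require Import all_boot ssralg ssrnum ssrint poly zify ring.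
Set Implicit Arguments. Unset Strict Implicit. Unset Printing Implicit Defensive.
Import GRing.Theory Num.Theory.

(* Deleting a nonempty edge set S of the cycle, each vertex lies in the part
   ending at the first deleted edge reached from it going forward, so the parts
   are the fibres of this map.  Reading S as a bit string, the weight of S is a
   left-to-right product in which only the part through vertex 0 wraps around.
   Summing over all bit strings, that part, of size a, sits in a positions and
   the rest is a linear composition of d - a, whose alpha-weights sum to
   C_(d-a+1).  Both this and the identity sum_a a alpha_a C_(d-a+1) = C(2d, d)
   (obtained by symmetrising sum_k (k+1) C_k C_(d-k)) rest on Segner's
   recurrence sum_i C_i C_(m-i) = C_(m+1).  For the latter, the recurrence
   (m+2) C_(m+1) = (4m+2) C_m makes Q = x C^2 - C + 1 satisfy
   x (1 - 4x) Q' + Q = 0 with Q(0) = 0, which forces Q = 0. *)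

Lemma mul_catalan_succ m : catalan m * m.+1 = 'C(2 * m, m).
Proof.
have le_bin : 'C(m.*2, m.+1) <= 'C(m.*2, m).
  rewrite -(leq_pmul2l (ltn0Sn m)) mul_bin_left leq_mul2r.
  by apply/orP; right; lia.
have bin_diff : 'C(m.*2, m) = m.+1 * ('C(m.*2, m) - 'C(m.*2, m.+1)).
  rewrite mulnBr mul_bin_left; have -> : m.*2 - m = m by lia.
  lia.
by rewrite /catalan mul2n divnK // bin_diff dvdn_mulr.
Qed.

Lemma mul_central_binS m :
  m.+1 * 'C(2 * m.+1, m.+1) = (4 * m + 2) * 'C(2 * m, m).
Proof.
have e1 := mul_bin_diag (2 * m.+1) m.
have e2 := mul_bin_diag (2 * m).+1 m.
have e3 : 'C((2 * m).+1, m.+1) = 'C((2 * m).+1, m).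
  by rewrite -bin_sub ?subSS; [congr 'C(_, _)|]; lia.
rewrite /= e3 in e2; rewrite (_ : (2 * m.+1).-1 = (2 * m).+1) in e1; last by lia.
apply/eqP; rewrite -(eqn_pmul2l (ltn0Sn m)); apply/eqP.
rewrite -e1 mulnCA -e2; lia.
Qed.

Lemma catalanS m : m.+2 * catalan m.+1 = (4 * m + 2) * catalan m.
Proof.
apply/eqP; rewrite -(eqn_pmul2l (ltn0Sn m)); apply/eqP.
rewrite mulnCA [m.+2 * _]mulnC -mulnA mul_catalan_succ mulnCA.
by rewrite [m.+1 * catalan m]mulnC mul_catalan_succ mul_central_binS.
Qed.

Section Segner.
Local Open Scope ring_scope.

Definition vanish_below (N : nat) (p : {poly int}) :=
  forall i, (i < N)%N -> p`_i = 0.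

Lemma vanish_belowMl N (q p : {poly int}) :
  vanish_below N p -> vanish_below N (q * p).
Proof.
move=> p0 i lt_iN; rewrite coefM big1 // => j _.
by rewrite p0 ?mulr0 //; apply: leq_ltn_trans lt_iN; apply: leq_subr.
Qed.

Lemma vanish_below_ode M (Q : {poly int}) : Q`_0 = 0 ->
  vanish_below M ('X * Q^`() - ('X * ('X * Q^`())) *+ 4 + Q) -> vanish_below M Q.
Proof.
move=> Q0 ode; elim=> [//|j IH] lt_jM; have := ode _ lt_jM.
rewrite !coefD !coefN !coefMn !coefXM /= !coef_deriv.
case: j IH lt_jM => [|j] IH lt_jM /=.
  by rewrite subr0 => /eqP; rewrite -mulr2n mulrn_eq0 => /eqP.
rewrite IH ?(ltnW lt_jM) // mul0rn mul0rn subr0 -mulrSr => /eqP.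
by rewrite mulrn_eq0 => /eqP.
Qed.

Section CatalanSeries.
Variables (N : nat) (c : {poly int}).
Hypothesis cE : forall i, (i < N)%N -> c`_i = (catalan i)%:R.

Lemma catalan_series_ode :
  vanish_below N ('X * c^`() - ('X * ('X * c^`())) *+ 4 - ('X * c) *+ 2 + c - 1).
Proof.
move=> [|[|m]] lt_mN; rewrite !coefD !coefN !coefMn coef1 !coefXM /=.
- by rewrite cE //= subr0 subrr.
- by rewrite coef_deriv !cE //= ltnW.
rewrite !coef_deriv !cE ?(ltnW lt_mN) //.
have := catalanS m.+1; lia.
Qed.

Lemma catalan_series_quadratic : vanish_below N ('X * c ^+ 2 - c + 1).
Proof.
have [-> i //|N_gt0] := posnP N; apply: vanish_below_ode.
  by rewrite !coefD coefN coefXM coef1 cE //= subrr.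
have -> : 'X * ('X * c ^+ 2 - c + 1)^`() - ('X * ('X * ('X * c ^+ 2 - c + 1)^`())) *+ 4
    + ('X * c ^+ 2 - c + 1)
  = (('X * c) *+ 2 - 1)
    * ('X * c^`() - ('X * ('X * c^`())) *+ 4 - ('X * c) *+ 2 + c - 1).
  by rewrite !derivE; ring.
exact/vanish_belowMl/catalan_series_ode.
Qed.
End CatalanSeries.
End Segner.

Lemma catalan_convolution m : \sum_(i < m.+1) catalan i * catalan (m - i) = catalan m.+1.
Proof.
pose c : {poly int} := (\poly_(i < m.+2) (catalan i)%:R)%R.
have cE i : i < m.+2 -> (c`_i = (catalan i)%:R)%R by move=> lt_im; rewrite coef_poly lt_im.
have := catalan_series_quadratic cE (ltnSn m.+1).
rewrite !coefD coefN coef1 coefXM /= addr0 expr2 coefM cE // => /eqP.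
rewrite subr_eq0 (eq_bigr (fun j : 'I_m.+1 => (catalan j * catalan (m - j))%:R%R)).
  by rewrite -natr_sum eqr_nat => /eqP.
by move=> j _; have lt_jm := ltn_ord j; rewrite natrM !cE //; lia.
Qed.

Lemma sum_alpha n (F : nat -> nat) :
  \sum_(j < n.+1) alpha j.+1 * F j = \sum_(j < n.+1) catalan j * F j + F 0.
Proof.
have -> : F 0 = \sum_(j < n.+1) (j == 0 :> nat) * F j.
  by rewrite big_ord_recl big1 ?addn0 ?mul1n.
by rewrite -big_split /=; apply: eq_bigr => j _; rewrite -mulnDl.
Qed.

Lemma sum_alpha_catalan m :
  \sum_(j < m.+1) alpha j.+1 * catalan (m - j).+1 = catalan m.+2.
Proof.
rewrite (sum_alpha m (fun j => catalan (m - j).+1)) -(catalan_convolution m.+1).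
rewrite [RHS]big_ord_recr /= subnn muln1 subn0.
by congr (_ + _); apply: eq_bigr => j _; rewrite subSn // -ltnS.
Qed.

Lemma central_bin_alpha_catalan d : 0 < d ->
  'C(2 * d, d) = \sum_(j < d) j.+1 * alpha j.+1 * catalan (d - j).
Proof.
case: d => // d _.
set T := \sum_(k < d.+2) k.+1 * (catalan k * catalan (d.+1 - k)).
have T_sym : T + T = d.+3 * catalan d.+2.
  rewrite -(catalan_convolution d.+1) big_distrr {2}/T (reindex_inj rev_ord_inj) -big_split /=.
  apply: eq_bigr => k _; have le_kd : k <= d.+1 by rewrite -ltnS.
  rewrite subKn // [catalan _ * catalan k]mulnC -mulnDl; congr (_ * _); lia.
have T_last :
    T = \sum_(j < d.+1) j.+1 * (catalan j * catalan (d.+1 - j)) + d.+2 * catalan d.+1.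
  by rewrite /T big_ord_recr /= subnn muln1.
under eq_bigr => j _ do rewrite -mulnA mulnCA.
rewrite (sum_alpha d (fun j => j.+1 * catalan (d.+1 - j))) subn0 mul1n -mul_catalan_succ.
under eq_bigr => j _ do rewrite mulnCA.
have := catalanS d.+1; rewrite -T_sym T_last.
by move: (\sum_(j < d.+1) _) (catalan d.+1) => S C; nia.
Qed.

Section NextTrue.
Variable s : seq bool.

(* When no true occurs at or after [y], [next_true y] is [maxn y (size s)];
   [cnext_true] then wraps around to the first true. *)
Definition next_true y := y + find id (drop y s).

Definition cnext_true y := if next_true y < size s then next_true y else find id s.

Definition cdist y :=
  if next_true y < size s then next_true y - y else size s - y + find id s.

Lemma next_true_id y : y < size s -> nth false s y -> next_true y = y.
Proof. by move=> lt_ys sy; rewrite /next_true (drop_nth false lt_ys) /= sy addn0. Qed.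

Lemma next_true_skip y : y < size s -> ~~ nth false s y -> next_true y = next_true y.+1.
Proof.
by move=> lt_ys sy; rewrite /next_true (drop_nth false lt_ys) /= (negbTE sy) addSnnS.
Qed.

Lemma next_true_last y : y.+1 = size s -> ~~ nth false s y -> next_true y = size s.
Proof.
move=> ys sy; rewrite next_true_skip ?ys // /next_true drop_oversize ?ys //.
by rewrite addn0.
Qed.

Lemma nth_next_true y : next_true y < size s -> nth false s (next_true y).
Proof.
rewrite /next_true => lt_ys; have has_drop : has id (drop y s).
  by rewrite has_find size_drop; lia.
by have := nth_find false has_drop; rewrite nth_drop.
Qed.

Hypothesis has_s : has id s.

Lemma cnext_true_lt y : cnext_true y < size s.
Proof. by rewrite /cnext_true; case: ifP; rewrite // -has_find. Qed.

Lemma nth_cnext_true y : nth false s (cnext_true y).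
Proof.
rewrite /cnext_true; case: ifP => [|_]; first exact: nth_next_true.
by have := nth_find false has_s.
Qed.

Lemma cnext_true_id y : y < size s -> nth false s y -> cnext_true y = y.
Proof. by move=> lt_ys sy; rewrite /cnext_true next_true_id ?lt_ys. Qed.

Lemma cnext_trueS y : y < size s -> ~~ nth false s y ->
  cnext_true (y.+1 %% size s) = cnext_true y.
Proof.
move=> lt_ys sy; have [lt_y1s|] := ltnP y.+1 (size s).
  by rewrite modn_small // /cnext_true -next_true_skip.
rewrite leq_eqVlt ltnNge lt_ys orbF eq_sym => /eqP ys.
rewrite -ys modnn /cnext_true (next_true_last ys sy) -ys ltnn /next_true drop0.
by rewrite ys -has_find has_s.
Qed.

Lemma cdistS y : y < size s -> ~~ nth false s y ->
  cdist (y.+1 %% size s) < cdist y.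
Proof.
move=> lt_ys sy; have find_lt : find id s < size s by rewrite -has_find.
have [lt_y1s|] := ltnP y.+1 (size s).
  rewrite modn_small // /cdist -next_true_skip //.
  have := leq_addr (find id (drop y.+1 s)) y.+1; rewrite -/(next_true y.+1).
  rewrite -next_true_skip //; case: ifP; lia.
rewrite leq_eqVlt ltnNge lt_ys orbF eq_sym => /eqP ys.
rewrite -ys modnn /cdist (next_true_last ys sy) -ys ltnn /next_true drop0 add0n.
rewrite ys find_lt; lia.
Qed.

End NextTrue.

(* The [trail_len s] positions after the last true have no next true;
   cyclically they belong to the run of the first true. *)
Definition run_len (s : seq bool) x := \sum_(0 <= y < size s) (next_true s y == x).

Definition trail_len (s : seq bool) := \sum_(0 <= y < size s) (size s <= next_true s y).

Lemma card_cnext_true s x : x < size s ->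
  \sum_(0 <= y < size s) (cnext_true s y == x) =
  run_len s x + (x == find id s) * trail_len s.
Proof.
move=> lt_xs; rewrite /run_len /trail_len big_distrr -big_split /=.
apply: eq_bigr => y _; rewrite /cnext_true; case: ltnP => [lt_ys|le_sy].
  by rewrite muln0 addn0.
have -> : (next_true s y == x) = false.
  by apply/eqP => ex; move: le_sy; rewrite ex leqNgt lt_xs.
by rewrite muln1 eq_sym.
Qed.

Lemma next_true_cons0 b r : next_true (b :: r) 0 = if b then 0 else (find id r).+1.
Proof. by case: b. Qed.

Lemma run_len_consS b r x :
  run_len (b :: r) x.+1 = (next_true (b :: r) 0 == x.+1) + run_len r x.
Proof. by rewrite /run_len /= big_nat_recl. Qed.

Lemma trail_len_cons b r :
  trail_len (b :: r) = (size r < next_true (b :: r) 0) + trail_len r.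
Proof. by rewrite /trail_len /= big_nat_recl. Qed.

Lemma prod_nth_cons (F : nat -> nat) b r :
  \prod_(0 <= x < size (b :: r) | nth false (b :: r) x) F x =
  (if b then F 0 else 1) * \prod_(0 <= x < size r | nth false r x) F x.+1.
Proof. by rewrite /= big_mkcond big_nat_recl // -big_mkcond. Qed.

(* [cycle_weight m s]: [m] falses precede [s]; after the first true the
   remaining bits [r] are weighed by [tail_weight c k r], where [c] is the size
   of the run through the first true (so far) and [k] the number of falses since
   the last true.  The run left open at the end closes that first run. *)
Fixpoint tail_weight (c k : nat) (r : seq bool) : nat :=
  match r with
  | [::] => alpha (c + k)
  | true :: r => alpha k.+1 * tail_weight c 0 r
  | false :: r => tail_weight c k.+1 r
  end.

Fixpoint cycle_weight (m : nat) (s : seq bool) : nat :=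
  match s with
  | [::] => 0
  | true :: r => tail_weight m.+1 0 r
  | false :: r => cycle_weight m.+1 r
  end.

Lemma tail_weightE c k r :
  tail_weight c k r =
  \prod_(0 <= x < size r | nth false r x) alpha (run_len r x + (x == find id r) * k)
  * alpha (c + trail_len r + ~~ has id r * k).
Proof.
elim: r c k => [|b r IH] c k.
  by rewrite /trail_len !big_geq //= addn0 !mul1n.
rewrite prod_nth_cons trail_len_cons next_true_cons0; case: b => /=.
  rewrite IH muln0 !addn0 mulnA; congr (_ * _ * _).
  - by rewrite /run_len /= big_nat_recl // big1 // next_true_cons0 mul1n.
  - by apply: eq_bigr => x _; rewrite run_len_consS next_true_cons0 muln0 mul0n !addn0.
rewrite mul1n IH; congr (_ * alpha _).
  apply: eq_bigr => x _; rewrite run_len_consS next_true_cons0 !eqSS (eq_sym (find id r)).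
  by case: eqP => _; congr alpha; lia.
rewrite ltnS leqNgt -has_find; case: (has id r); lia.
Qed.

Lemma cycle_weightE m s :
  cycle_weight m s =
  has id s * \prod_(0 <= x < size s | nth false s x)
               alpha (run_len s x + (x == find id s) * (m + trail_len s)).
Proof.
elim: s m => [|b r IH] m //; rewrite prod_nth_cons trail_len_cons next_true_cons0.
case: b => /=.
  rewrite tail_weightE muln0 addn0 !mul1n mulnC; congr (alpha _ * _).
    by rewrite /run_len /= big_nat_recl // big1 //; lia.
  by apply: eq_bigr => x _; rewrite run_len_consS next_true_cons0 !muln0 mul0n !addn0.
rewrite IH mul1n; case: (boolP (has id r)) => //= has_r; congr (_ * _).
apply: eq_bigr => x _; rewrite run_len_consS next_true_cons0 !eqSS (eq_sym (find id r)).
by rewrite ltnS leqNgt -has_find has_r; case: eqP => _; congr alpha; lia.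
Qed.

Lemma cyc_parts_prod d (S : {set 'I_d}) (p : 'I_d -> 'I_d) (f : nat -> nat) :
  (forall x, p x \in S) -> (forall x, x \in S -> p x = x) ->
  (forall x, x \notin S -> p (ordS x) = p x) ->
  (forall x, connect (cyc_adj S) x (p x)) ->
  \prod_(P in cyc_parts S) f #|P| = \prod_(x in S) f #|[set y | p y == x]|.
Proof.
move=> pS p_id pS_step p_connect.
have p_adj x y : cyc_adj S x y -> p x = p y.
  by case/orP=> /andP[/pS_step<- /eqP->] //; rewrite pS_step.
have connectE x y : connect (cyc_adj S) x y = (p x == p y).
  apply/idP/eqP => [/connectP[q adj_q ->{y}]|pxy].
    by elim: q x adj_q => //= z q IH x /andP[/p_adj-> /IH].
  apply: connect_trans (p_connect x) _.
  have adj_sym : symmetric (cyc_adj S) by move=> u v; rewrite /cyc_adj orbC.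
  by rewrite pxy (sym_connect_sym adj_sym).
have -> : cyc_parts S = [set [set y | p y == x] | x in S].
  apply/setP => P; apply/imsetP/imsetP => [[x _ ->]|[x xS ->]].
    by exists (p x) => //; apply/setP => y; rewrite !inE connectE eq_sym.
  by exists x => //; apply/setP => y; rewrite !inE connectE (p_id _ xS) eq_sym.
rewrite big_imset //= => x1 x2 x1S _ /setP /(_ x1).
by rewrite !inE (p_id _ x1S) eqxx => /esym /eqP.
Qed.

Definition bits d (S : {set 'I_d}) : seq bool := [seq i \in S | i <- enum 'I_d].

Lemma size_bits d (S : {set 'I_d}) : size (bits S) = d.
Proof. by rewrite size_map size_enum_ord. Qed.

Lemma nth_bits d (S : {set 'I_d}) (x : 'I_d) : nth false (bits S) x = (x \in S).
Proof.
rewrite (nth_map x) ?size_enum_ord //; congr (_ \in S); apply: val_inj.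
by rewrite /= nth_enum_ord.
Qed.

Lemma has_bits d (S : {set 'I_d}) : has id (bits S) = (S != set0).
Proof.
rewrite has_map; apply/hasP/set0Pn => [[x _ /= xS]|[x xS]]; first by exists x.
by exists x; rewrite ?mem_enum.
Qed.

(* Edge [i] joins [i] and [i + 1], so a vertex lies in the part ending at the
   first deleted edge reached going forward from it. *)
Definition next_deleted d (S : {set 'I_d}) (x : 'I_d) : 'I_d :=
  insubd x (cnext_true (bits S) x).

Section NextDeleted.
Variables (d : nat) (S : {set 'I_d}).
Hypothesis S_neq0 : S != set0.

Let has_bitsS : has id (bits S). Proof. by rewrite has_bits. Qed.

Lemma val_next_deleted x : val (next_deleted S x) = cnext_true (bits S) x.
Proof.
have := cnext_true_lt has_bitsS x; rewrite size_bits => lt_d.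
by rewrite /next_deleted val_insubd lt_d.
Qed.

Lemma next_deleted_in x : next_deleted S x \in S.
Proof. by rewrite -nth_bits val_next_deleted nth_cnext_true. Qed.

Lemma next_deleted_id x : x \in S -> next_deleted S x = x.
Proof.
move=> xS; apply: val_inj; rewrite val_next_deleted cnext_true_id ?nth_bits //.
by rewrite size_bits.
Qed.

Lemma next_deletedS x : x \notin S -> next_deleted S (ordS x) = next_deleted S x.
Proof.
move=> xS; apply: val_inj; rewrite !val_next_deleted /=.
by have := cnext_trueS has_bitsS; rewrite size_bits => ->; rewrite ?nth_bits.
Qed.

Lemma connect_next_deleted x : connect (cyc_adj S) x (next_deleted S x).
Proof.
move: (leqnn (cdist (bits S) x)); move: {2}(cdist _ x) => n.
elim: n x => [|n IH] x le_xn; case xS: (x \in S); try by rewrite next_deleted_id.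
all: have := cdistS has_bitsS; rewrite size_bits => /(_ x (ltn_ord x)).
all: rewrite nth_bits xS => /(_ isT) lt_dist.
  by move: (leq_trans lt_dist le_xn).
rewrite -(next_deletedS (negbT xS)); apply: connect_trans (connect1 _) (IH _ _).
  by rewrite /cyc_adj xS eqxx.
by rewrite -ltnS; apply: leq_trans lt_dist le_xn.
Qed.

Lemma cyc_parts_weight : \prod_(P in cyc_parts S) alpha #|P| = cycle_weight 0 (bits S).
Proof.
rewrite (cyc_parts_prod alpha next_deleted_in next_deleted_id next_deletedS
           connect_next_deleted).
rewrite cycle_weightE has_bitsS mul1n size_bits big_mkord.
apply: eq_big => [x|x _]; first by rewrite nth_bits.
rewrite add0n -card_cnext_true ?size_bits // big_mkord -sum1_card big_mkcond /=.
congr alpha; apply: eq_bigr => y _.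
by rewrite inE -val_eqE val_next_deleted; case: (_ == _).
Qed.

End NextDeleted.

Lemma cons_inj T (x : T) : injective (cons x).
Proof. by move=> s t []. Qed.

Fixpoint bitseqs n : seq (seq bool) :=
  if n is n'.+1 then [seq true :: s | s <- bitseqs n'] ++ [seq false :: s | s <- bitseqs n']
  else [:: [::]].

Lemma mem_bitseqs n s : (s \in bitseqs n) = (size s == n).
Proof.
elim: n s => [|n IH] [|b s] //=; rewrite mem_cat.
  by apply/negP => /orP[] /mapP[].
by case: b; rewrite (mem_map (@cons_inj _ _)) IH eqSS; case: (size s == n);
  rewrite /= ?orbT ?orbF //; apply/negbTE/mapP => -[].
Qed.

Lemma uniq_bitseqs n : uniq (bitseqs n).
Proof.
elim: n => [|n IH] //=; rewrite cat_uniq !(map_inj_uniq (@cons_inj _ _)) IH.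
by rewrite andbT; apply/hasP => -[_ /mapP[s _ ->] /mapP[]].
Qed.

Lemma sum_set_bits d (F : seq bool -> nat) :
  \sum_(S : {set 'I_d}) F (bits S) = \sum_(s <- bitseqs d) F s.
Proof.
rewrite -(big_map (@bits d) xpredT F); apply/perm_big/uniq_perm.
- rewrite map_inj_uniq ?index_enum_uniq // => S T eqST.
  by apply/setP => x; rewrite -!nth_bits eqST.
- exact: uniq_bitseqs.
move=> s; rewrite mem_bitseqs; apply/mapP/eqP => [[S _ ->]|size_s].
  exact: size_bits.
exists [set x : 'I_d | nth false s x]; first by rewrite mem_index_enum.
apply: (@eq_from_nth _ false) => [|i]; first by rewrite size_s (size_bits (d := d)).
rewrite size_s => lt_id.
by have -> : i = Ordinal lt_id by []; rewrite nth_bits inE.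
Qed.

Lemma sum_triangle_swap n (F : nat -> nat -> nat) :
  \sum_(j < n) \sum_(i < n - j) F j i = \sum_(i < n) \sum_(j < n - i) F j i.
Proof.
transitivity (\sum_(j < n) \sum_(i < n | i < n - j) F j i).
  by apply: eq_bigr => j _; rewrite (big_ord_widen _ _ (leq_subr j n)).
rewrite (exchange_big_dep xpredT) //=; apply: eq_bigr => i _.
rewrite (big_ord_widen _ (F^~ i) (leq_subr i n)); apply: eq_bigl => j.
by rewrite !ltn_subRL addnC.
Qed.

Definition tail_sum c k n := \sum_(r <- bitseqs n) tail_weight c k r.

Definition cycle_sum m n := \sum_(s <- bitseqs n) cycle_weight m s.

Lemma big_bitseqsS (F : seq bool -> nat) n :
  \sum_(s <- bitseqs n.+1) F s =
  \sum_(s <- bitseqs n) F (true :: s) + \sum_(s <- bitseqs n) F (false :: s).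
Proof. by rewrite big_cat !big_map. Qed.

Lemma tail_sumS c k n :
  tail_sum c k n.+1 = alpha k.+1 * tail_sum c 0 n + tail_sum c k.+1 n.
Proof. by rewrite /tail_sum big_bitseqsS big_distrr. Qed.

Lemma tail_sum_unfold c n k :
  tail_sum c k n =
  alpha (c + k + n) + \sum_(j < n) alpha (k + j).+1 * tail_sum c 0 (n.-1 - j).
Proof.
elim: n k => [|n IH] k; first by rewrite /tail_sum big_seq1 big_ord0 !addn0.
rewrite tail_sumS (IH k.+1) big_ord_recl addn0 subn0 addnS -addSnnS addnCA.
congr (_ + (_ + _)); apply: eq_bigr => j _.
by congr (alpha _ * tail_sum _ _ _); rewrite /= /bump; lia.
Qed.

Lemma tail_sum0E c n :
  tail_sum c 0 n = \sum_(i < n.+1) alpha (c + i) * catalan (n - i).+1.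
Proof.
elim/ltn_ind: n => n IH.
rewrite tail_sum_unfold addn0 big_ord_recr /= subnn (_ : catalan 1 = 1) // muln1 addnC.
congr (_ + _).
pose F j i := alpha j.+1 * (alpha (c + i) * catalan (n.-1 - j - i).+1).
transitivity (\sum_(j < n) \sum_(i < n - j) F j i).
  apply: eq_bigr => j _; have lt_jn := ltn_ord j.
  rewrite IH ?big_distrr; last by lia.
  by have -> : (n.-1 - j).+1 = n - j by lia.
rewrite sum_triangle_swap; apply: eq_bigr => i _; have lt_in := ltn_ord i.
have -> : n - i = (n.-1 - i).+1 by lia.
rewrite -sum_alpha_catalan big_distrr; apply: eq_bigr => j _.
by rewrite /F mulnCA; congr (_ * (_ * catalan _)); lia.
Qed.

Lemma cycle_sumS m n : cycle_sum m n.+1 = tail_sum m.+1 0 n + cycle_sum m.+1 n.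
Proof. by rewrite /cycle_sum big_bitseqsS. Qed.

Lemma cycle_sumE m n :
  cycle_sum m n = \sum_(k < n) k.+1 * alpha (m + k).+1 * catalan (n - k).
Proof.
elim: n m => [|n IH] m; first by rewrite /cycle_sum big_seq1 big_ord0.
rewrite cycle_sumS IH tail_sum0E.
under [RHS]eq_bigr => k _ do rewrite -mulnA mulSn.
rewrite big_split /= [X in _ = _ + X]big_ord_recl mul0n add0n.
congr (_ + _); apply: eq_bigr => k _.
  by rewrite addSn subSn // -ltnS.
by rewrite /= /bump add1n mulnA addnS subSS.
Qed.

Theorem lemma3p3 (d : nat) : 1 <= d ->
  'C(2 * d, d) =
  \sum_(S : {set 'I_d} | S != set0) \prod_(P in cyc_parts S) alpha #|P|.
Proof.
move=> d_gt0; rewrite central_bin_alpha_catalan //.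
transitivity (cycle_sum 0 d); first by rewrite cycle_sumE.
rewrite /cycle_sum -sum_set_bits [RHS]big_mkcond /=; apply: eq_bigr => S _.
case: ifPn => [S_neq0|]; first by rewrite cyc_parts_weight.
by rewrite cycle_weightE has_bits => /negbTE->.
Qed.
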